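(* Let $\mathbb{F}$ be a field of characteristic $0$ and $h=\mathsf{u}_1^{\alpha_1}\cdots\mathsf{u}_t^{\alpha_t}\in\mathbb{F}[x]$ with $\mathsf{u}_i$ distinct monic irreducible polynomials, $\alpha_1,\dots,\alpha_k\geq2$, $\alpha_{k+1}=\dots=\alpha_t=1$, and $k\geq1$. Let $\Theta_1=\mathsf{u}_1\cdots\mathsf{u}_k$. Then there is $\nu\in\mathbb{F}[x]$, unique modulo $\Theta_1\mathbb{F}[x]$, with $\nu\delta_0(1)\equiv1\pmod{\Theta_1\mathbb{F}[x]}$, and any such $\nu$ satisfies: (a) $\nu\pi_h'-1\equiv\nu\frac{\pi_hh'}{h}\pmod{\Theta_1\mathbb{F}[x]}$; (b) $\nu\pi_h'\equiv\frac{1}{1-\alpha_j}\pmod{\mathsf{u}_j\mathbb{F}[x]}$ for all $1\leq j\leq k$.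
   Context: $\pi_h=\mathsf{u}_1\cdots\mathsf{u}_t$, so $\pi_hh'/h\in\mathbb{F}[x]$, and $\delta_0(1)=\pi_h'-\pi_hh'/h$. *)

From mathcomp Require Import all_boot all_order all_algebra.
Set Implicit Arguments. Unset Strict Implicit. Unset Printing Implicit Defensive.
Import GRing.Theory.
Local Open Scope ring_scope.

(* Polynomials indexed by 0 .. t-1 (the paper's u_1 .. u_t). *)
Definition hpoly (F : fieldType) (t : nat) (u : nat -> {poly F}) (alpha : nat -> nat)
  : {poly F} := \prod_(i < t) u i ^+ alpha i.

Definition pi_h (F : fieldType) (t : nat) (u : nat -> {poly F}) : {poly F} :=
  \prod_(i < t) u i.

Definition Theta1 (F : fieldType) (k : nat) (u : nat -> {poly F}) : {poly F} :=
  \prod_(i < k) u i.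

(* pi_h h' / h : an exact polynomial quotient (h divides pi_h h'). *)
Definition pihh'_h (F : fieldType) (t : nat) (u : nat -> {poly F}) (alpha : nat -> nat)
  : {poly F} :=
  (pi_h t u * (hpoly t u alpha)^`()) %/ hpoly t u alpha.

Definition delta0_1 (F : fieldType) (t : nat) (u : nat -> {poly F}) (alpha : nat -> nat)
  : {poly F} := (pi_h t u)^`() - pihh'_h t u alpha.

Definition pcong (F : fieldType) (a b m : {poly F}) : Prop := m %| (a - b).

From mathcomp Require Import all_boot all_order all_algebra.
From mathcomp Require Import ring.
Set Implicit Arguments. Unset Strict Implicit. Unset Printing Implicit Defensive.
Import GRing.Theory.
Local Open Scope ring_scope.

(* Write pi_h = u_j Q_j and h = u_j^(alpha_j) G_j with u_j coprime to G_j.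
   By the logarithmic derivative, pi_h h'/h = alpha_j u_j' Q_j + u_j Q_j G_j'/G_j,
   so modulo u_j we get pi_h h'/h = alpha_j pi_h' and delta_0(1) = (1 - alpha_j) pi_h'.
   In characteristic 0, pi_h' = u_j' Q_j is a unit modulo u_j and 1 - alpha_j != 0
   when alpha_j >= 2, so delta_0(1) is invertible modulo every u_j with j <= k,
   hence modulo Theta_1.  Then (a) is the definition of delta_0(1), and (b) follows
   by dividing by 1 - alpha_j. *)

Section PolyFacts.
Variable F : fieldType.
Implicit Types p q m d e nu : {poly F}.

Lemma deriv_neq0_pchar0 p : [pchar F] =i pred0 -> (1 < size p)%N -> p^`() != 0.
Proof.
move=> /pcharf0P F0 sp; apply: contraTneq sp => /(congr1 (coefp (size p).-2)).
rewrite /= coef_deriv coef0 -mulr_natr => /eqP; rewrite mulf_eq0 F0.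
case: (size p) (lead_coefE p) (lead_coef_eq0 p) (size_poly_eq0 p) => [|[|n]] //=.
by move=> <- -> <-.
Qed.

Lemma eqr_nat_pchar0 (m n : nat) :
  [pchar F] =i pred0 -> (m%:R == n%:R :> F) = (m == n).
Proof.
move=> /pcharf0P F0; wlog le_mn : m n / (m <= n)%N.
  by move=> wlog_mn; case: (leqP m n) => [|/ltnW] /wlog_mn; rewrite // eq_sym (eq_sym m).
rewrite -(subnKC le_mn) natrD -subr_eq0 opprD addrA subrr add0r oppr_eq0 F0.
by rewrite -[X in _ = (X == _)]addn0 eqn_add2l eq_sym.
Qed.

Lemma coprimep_deriv_irredp p :
  [pchar F] =i pred0 -> irreducible_poly p -> coprimep p p^`().
Proof.
move=> F0 p_irr; rewrite irreducible_poly_coprime //.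
have p'_neq0 := deriv_neq0_pchar0 F0 p_irr.1.
by rewrite gtNdvdp // lt_size_deriv // irredp_neq0.
Qed.

Lemma coprimep_monic_irredp p q :
  p \is monic -> q \is monic -> irreducible_poly p -> irreducible_poly q ->
  p != q -> coprimep p q.
Proof.
move=> p_mon q_mon p_irr q_irr; apply: contra_neqT.
rewrite irreducible_poly_coprime // negbK => p_dvd_q; apply/eqP.
by rewrite -eqp_monic // q_irr // eq_sym ltn_eqF //; case: p_irr.
Qed.

Lemma coprimep_prodr (I : finType) (P : pred I) (q : I -> {poly F}) p :
  (forall i, P i -> coprimep p (q i)) -> coprimep p (\prod_(i | P i) q i).
Proof.
move=> pq; apply: (big_ind (coprimep p)) => //; first exact: coprimep1.
by move=> x y px py; rewrite coprimepMr px py.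
Qed.

Lemma prod_dvdp_coprime n (q : nat -> {poly F}) m :
  (forall i j, (i < n)%N -> (j < n)%N -> i != j -> coprimep (q i) (q j)) ->
  (forall i, (i < n)%N -> q i %| m) -> \prod_(i < n) q i %| m.
Proof.
elim: n => [|n IHn] q_cop q_m; first by rewrite big_ord0 dvd1p.
rewrite big_ord_recr /= Gauss_dvdp ?q_m ?IHn //.
- by move=> i j i_n j_n; apply: q_cop; apply: ltnW.
- by move=> i i_n; apply: q_m; apply: ltnW.
rewrite coprimep_sym; apply: coprimep_prodr => i _.
by apply: q_cop; rewrite ?ltnS ?(ltnW (ltn_ord i)) // eq_sym ltn_eqF.
Qed.

Lemma pcong_coprimep m d e : pcong d e m -> coprimep m d = coprimep m e.
Proof. by case/dvdpP=> q de; rewrite -[d](subrK e) de coprimep_addl_mul. Qed.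

Lemma dvdp_exp_mul_deriv p G a : (0 < a)%N -> p ^+ a %| p * (p ^+ a * G)^`().
Proof.
case: a => // a _; apply/dvdpP; exists (a.+1%:R * p^`() * G + p * G^`()).
by rewrite derivM deriv_exp /= -mulr_natr exprS; ring.
Qed.

Lemma pcong_log_deriv p Q G X a : (0 < a)%N -> p != 0 -> coprimep p G ->
  X * (p ^+ a * G) = p * Q * (p ^+ a * G)^`() ->
  pcong X (a%:R * (p * Q)^`()) p.
Proof.
case: a => // a _ p_neq0 pG eqX; rewrite /pcong -(Gauss_dvdpl _ pG).
apply/dvdpP; exists (Q * G^`() - a.+1%:R * Q^`() * G).
apply: (mulfI (expf_neq0 a.+1 p_neq0)).
have -> : p ^+ a.+1 * ((X - a.+1%:R * (p * Q)^`()) * G) =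
    X * (p ^+ a.+1 * G) - a.+1%:R * (p * Q)^`() * (p ^+ a.+1 * G) by ring.
by rewrite eqX !derivM deriv_exp /= -mulr_natr !exprS; ring.
Qed.

Lemma pcong_inv_exists m d : coprimep m d -> exists nu, pcong (nu * d) 1 m.
Proof.
case/Bezout_eq1_coprimepP => [[a b] /= eq1]; exists b.
by apply/dvdpP; exists (- a); rewrite -eq1; ring.
Qed.

Lemma pcong_inv_unique m d nu1 nu2 : coprimep m d ->
  pcong (nu1 * d) 1 m -> pcong (nu2 * d) 1 m -> pcong nu1 nu2 m.
Proof.
rewrite /pcong => md nu1d nu2d; rewrite -(Gauss_dvdpl _ md).
have -> : (nu1 - nu2) * d = (nu1 * d - 1) - (nu2 * d - 1) by ring.
exact: dvdp_sub.
Qed.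

Lemma pcong_inv_scale m nu d e c : c != 0 ->
  pcong (nu * d) 1 m -> pcong d (c%:P * e) m -> pcong (nu * e) c^-1%:P m.
Proof.
rewrite /pcong => c_neq0 nud de; rewrite -(dvdpZr _ _ c_neq0) -mul_polyC.
have -> : c%:P * (nu * e - c^-1%:P) = (nu * d - 1) - nu * (d - c%:P * e).
  by rewrite mulrBr -polyCM mulfV //; ring.
by rewrite dvdp_sub ?dvdp_mull.
Qed.

End PolyFacts.

Section SquarefreeDecomposition.
Variables (F : fieldType) (t : nat) (u : nat -> {poly F}) (alpha : nat -> nat).
Hypothesis u_monic : forall i, (i < t)%N -> u i \is monic.
Hypothesis u_irr : forall i, (i < t)%N -> irreducible_poly (u i).
Hypothesis u_inj : forall i j, (i < t)%N -> (j < t)%N -> u i = u j -> i = j.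
Hypothesis alpha_gt0 : forall i, (i < t)%N -> (0 < alpha i)%N.

Local Notation h := (hpoly t u alpha).
Local Notation pi := (pi_h t u).

Lemma coprimep_u i j : (i < t)%N -> (j < t)%N -> i != j -> coprimep (u i) (u j).
Proof.
move=> it jt ij.
apply: coprimep_monic_irredp (u_monic it) (u_monic jt) (u_irr it) (u_irr jt) _.
by apply: contraNneq ij => /(u_inj it jt) ->.
Qed.

Lemma pi_h_bigD1 (j : 'I_t) : pi = u j * \prod_(i < t | i != j) u i.
Proof. by rewrite /pi_h (bigD1 j). Qed.

Lemma hpoly_bigD1 (j : 'I_t) :
  h = u j ^+ alpha j * \prod_(i < t | i != j) u i ^+ alpha i.
Proof. by rewrite /hpoly (bigD1 j). Qed.

Lemma hpoly_dvdp_pi_deriv : h %| pi * h^`().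
Proof.
apply: (prod_dvdp_coprime (q := fun i => u i ^+ alpha i)) => [i j it jt ij | j jt].
  exact/coprimep_expl/coprimep_expr/coprimep_u.
rewrite (pi_h_bigD1 (Ordinal jt)) (hpoly_bigD1 (Ordinal jt)) /= mulrAC.
exact/dvdp_mulr/dvdp_exp_mul_deriv/alpha_gt0.
Qed.

Lemma pihh'_hK : pihh'_h t u alpha * h = pi * h^`().
Proof. by rewrite /pihh'_h divpK // hpoly_dvdp_pi_deriv. Qed.

Lemma pihh'_h_cong j : (j < t)%N ->
  pcong (pihh'_h t u alpha) ((alpha j)%:R * pi^`()) (u j).
Proof.
move=> jt; have := pihh'_hK.
rewrite (pi_h_bigD1 (Ordinal jt)) (hpoly_bigD1 (Ordinal jt)) /=.
apply: pcong_log_deriv; rewrite ?alpha_gt0 ?(irredp_neq0 (u_irr jt)) //.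
by apply: coprimep_prodr => i ij; apply/coprimep_expr/coprimep_u; rewrite // eq_sym.
Qed.

Lemma delta0_1_cong j : (j < t)%N ->
  pcong (delta0_1 t u alpha) ((1 - (alpha j)%:R)%:P * pi^`()) (u j).
Proof.
move=> jt; have := pihh'_h_cong jt; rewrite /pcong -dvdpNr.
by rewrite /delta0_1 polyCB polyC1 polyC_natr; congr (_ %| _); ring.
Qed.

Lemma coprimep_pi_h_deriv j :
  [pchar F] =i pred0 -> (j < t)%N -> coprimep (u j) pi^`().
Proof.
move=> F0 jt; rewrite (pi_h_bigD1 (Ordinal jt)) derivM /= addrC mulrC.
rewrite coprimep_addl_mul coprimepMr (coprimep_deriv_irredp F0 (u_irr jt)) /=.
by apply: coprimep_prodr => i ij; apply: coprimep_u; rewrite // eq_sym.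
Qed.

Lemma coprimep_Theta1_delta0_1 k : [pchar F] =i pred0 -> (k <= t)%N ->
  (forall i, (i < k)%N -> (2 <= alpha i)%N) ->
  coprimep (Theta1 k u) (delta0_1 t u alpha).
Proof.
move=> F0 kt alpha_ge2; rewrite coprimep_sym; apply: coprimep_prodr => j _.
have jt := leq_trans (ltn_ord j) kt.
rewrite coprimep_sym (pcong_coprimep (delta0_1_cong jt)) mul_polyC coprimepZr.
  exact: coprimep_pi_h_deriv.
by rewrite subr_eq0 (eqr_nat_pchar0 1) // ltn_eqF // alpha_ge2.
Qed.

End SquarefreeDecomposition.

Theorem lemma6p5 (F : fieldType) (t k : nat) (u : nat -> {poly F}) (alpha : nat -> nat) :
  [pchar F] =i pred0 ->
  (forall i, (i < t)%N -> u i \is monic) ->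
  (forall i, (i < t)%N -> irreducible_poly (u i)) ->
  (forall i j, (i < t)%N -> (j < t)%N -> u i = u j -> i = j) ->
  (1 <= k)%N -> (k <= t)%N ->
  (forall i, (i < k)%N -> (2 <= alpha i)%N) ->
  (forall i, (k <= i < t)%N -> alpha i = 1%N) ->
  let Th := Theta1 k u in
  let d := delta0_1 t u alpha in
  (exists nu : {poly F}, pcong (nu * d) 1 Th) /\
  (forall nu1 nu2 : {poly F}, pcong (nu1 * d) 1 Th -> pcong (nu2 * d) 1 Th ->
      pcong nu1 nu2 Th) /\
  (forall nu : {poly F}, pcong (nu * d) 1 Th ->
      pcong (nu * (pi_h t u)^`() - 1) (nu * pihh'_h t u alpha) Th /\
      (forall j, (j < k)%N ->
         pcong (nu * (pi_h t u)^`()) ((1 - (alpha j)%:R)^-1)%:P (u j))).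
Proof.
move=> F0 u_monic u_irr u_inj _ kt alpha_ge2 alpha_eq1 Th d.
have alpha_gt0 i : (i < t)%N -> (0 < alpha i)%N.
  case: (ltnP i k) => [/alpha_ge2/ltnW // | ki it].
  by rewrite alpha_eq1 ?ki.
have Th_d : coprimep Th d.
  exact: (coprimep_Theta1_delta0_1 u_monic u_irr u_inj alpha_gt0 F0 kt alpha_ge2).
split; first exact: pcong_inv_exists.
split; first by move=> nu1 nu2; apply: pcong_inv_unique.
move=> nu nu_d; split.
  by rewrite /pcong (_ : _ - _ = nu * d - 1) // /d /delta0_1; ring.
move=> j jk; have jt := leq_trans jk kt.
apply: pcong_inv_scale (delta0_1_cong u_monic u_irr u_inj alpha_gt0 jt).
  by rewrite subr_eq0 (eqr_nat_pchar0 1) // ltn_eqF // alpha_ge2.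
by apply: dvdp_trans nu_d; rewrite /Th /Theta1 (bigD1 (Ordinal jk)) //= dvdp_mulIl.
Qed.
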